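(* Let $n\ge2$, $\rho\ge0$, and let $\lambda$ be an eigenvalue of $K_n(\rho)=\left[\rho^{|j-k|}\right]_{j,k=1}^n$. Then $\lambda$ is extraordinary iff $|\lambda|>n$.
   Context: Convention $\rho^0=1$. Let $\sigma(\rho,\theta)=\frac{1-\rho^2}{1-2\rho\cos\theta+\rho^2}$ and $\mathrm{range}\{\sigma(\rho,\theta)\}=\{\sigma(\rho,\theta):\theta\in(-\pi,\pi]\}$. For real $\rho\notin\{-1,1\}$, an eigenvalue of $K_n(\rho)$ is called ordinary if it lies in $\mathrm{range}\{\sigma(\rho,\theta)\}$; for $\rho\in\{0,\pm1\}$ all eigenvalues are called ordinary. An eigenvalue is extraordinary if it is not ordinary. *)

From HB Require Import structures.
From mathcomp Require Import all_boot all_order all_algebra.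
From mathcomp Require Import all_classical all_reals all_analysis.
Set Implicit Arguments. Unset Strict Implicit. Unset Printing Implicit Defensive.
Import Order.TTheory GRing.Theory Num.Theory.
Local Open Scope ring_scope.

(* Kac-Murdock-Szego matrix K_n(rho) = [rho^|j-k|]; rho ^+ 0 = 1 (convention rho^0 = 1). *)
Definition KMS (R : realType) (n : nat) (rho : R) : 'M[R]_n :=
  \matrix_(j < n, k < n) rho ^+ `|(j : nat) - (k : nat)|%N.

Definition sigma (R : realType) (rho theta : R) : R :=
  (1 - rho ^+ 2) / (1 - 2 * rho * cos theta + rho ^+ 2).

Definition sigma_range (R : realType) (rho : R) : set R :=
  [set sigma rho theta | theta in [set t : R | - pi < t <= pi]].

Definition ordinary (R : realType) (rho lam : R) : Prop :=
  if (rho == 0) || (rho == 1) || (rho == -1) then True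
  else sigma_range rho lam.

Definition extraordinary (R : realType) (rho lam : R) : Prop := ~ ordinary rho lam.

From HB Require Import structures.
From mathcomp Require Import all_boot all_order all_algebra.
From mathcomp Require Import all_classical all_reals all_analysis.
From mathcomp Require Import ring lra zify.
Import Order.TTheory GRing.Theory Num.Theory.
Local Open Scope ring_scope.

(* For rho outside {0, 1}, K_n(rho)^-1 is (1 - rho^2)^-1 times the tridiagonal matrix with
   diagonal (1, 1 + rho^2, ..., 1 + rho^2, 1) and off-diagonal entries -rho.  Writing
   lam (1 + rho^2 - rho c) = 1 - rho^2, an eigenvector x for lam therefore satisfies the
   Chebyshev recurrence x_{k+2} = c x_{k+1} - x_k, whence x_k = x_0 (U_k - rho U_{k-1})(c/2);
   the last row and Cassini's identity then force lam = +-U_{n-1}(c/2).  As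
   sigma(rho, theta) = (1 - rho^2) / (1 + rho^2 - 2 rho cos theta), lam is ordinary iff
   |c| <= 2, and for n >= 2 this is exactly when |U_{n-1}(c/2)| <= n.  For rho in {0, 1} the
   entries of K_n(rho) lie in [0, 1], which bounds every eigenvalue by n. *)

(* [cheb c k] is the Chebyshev polynomial of the second kind U_{k-1} at c/2. *)
Fixpoint cheb {R : pzRingType} (c : R) (k : nat) : R :=
  match k with
  | 0 => 0
  | 1 => 1
  | (k'.+1 as k1).+1 => c * cheb c k1 - cheb c k'
  end.

Lemma chebSS (R : pzRingType) (c : R) k : cheb c k.+2 = c * cheb c k.+1 - cheb c k.
Proof. by []. Qed.

Section ChebyshevRing.
Context {R : comPzRingType}.
Implicit Types (c r : R) (x : nat -> R).

Lemma cheb_cassini c k : cheb c k.+1 ^+ 2 - cheb c k.+2 * cheb c k = 1.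
Proof.
elim: k => [|k IH]; first by rewrite /= mulr0 subr0 expr1n.
by rewrite -[RHS]IH !chebSS; ring.
Qed.

Lemma chebN c k : cheb (- c) k = (-1) ^+ k.+1 * cheb c k.
Proof.
elim/ltn_ind: k => -[|[|k]] IH; first by rewrite /= mulr0.
  by rewrite /= expr2 mulrNN !mulr1.
by rewrite !chebSS !IH // !exprS; ring.
Qed.

Lemma cheb_solution c x N :
  (forall k, (k.+2 < N)%N -> x k.+2 = c * x k.+1 - x k) ->
  forall k, (k.+1 < N)%N -> x k.+1 = x 1%N * cheb c k.+1 - x 0%N * cheb c k.
Proof.
move=> x_rec; elim/ltn_ind => -[|[|k]] IH k_lt.
- by rewrite /=; ring.
- by rewrite x_rec //=; ring.
rewrite x_rec // (IH k.+1) ?(IH k) ?chebSS; [ring | lia..].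
Qed.

Lemma cheb_boundary_sqr c r k : (0 < k)%N ->
  cheb c k.+1 - 2 * r * cheb c k + r ^+ 2 * cheb c k.-1 = 0 ->
  ((1 + r ^+ 2 - r * c) * cheb c k) ^+ 2 = (1 - r ^+ 2) ^+ 2.
Proof.
case: k => // k _.
have cassini := cheb_cassini c k; rewrite chebSS in cassini * => bnd.
set a := cheb c k.+1 in cassini bnd *; set b := cheb c k in cassini bnd *.
have -> : ((1 + r ^+ 2 - r * c) * a) ^+ 2 = (1 - r ^+ 2) ^+ 2 * (a ^+ 2 - (c * a - b) * b)
  + (c * a - b - 2 * r * a + r ^+ 2 * b) * (b - 2 * r * a + r ^+ 2 * (c * a - b)) by ring.
by rewrite cassini bnd; ring.
Qed.

End ChebyshevRing.

Section ChebyshevBounds.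
Context {R : realFieldType}.
Implicit Types c : R.

Lemma cheb_norm_le c k : `|c| <= 2 -> `|cheb c k| <= k%:R.
Proof.
move=> c_le2; elim: k => [|k IH]; first by rewrite normr0.
have cassini := cheb_cassini c k; rewrite chebSS in cassini.
set a := cheb c k.+1 in cassini *; set b := cheb c k in cassini IH *.
have c2_le4 : c ^+ 2 <= 4.
  by rewrite -[c ^+ 2]real_normK ?num_real //; have := normr_ge0 c; nra.
have near_a : `|a - c / 2 * b| <= 1.
  have sqr_le1 : (a - c / 2 * b) ^+ 2 <= 1.
    have -> : (a - c / 2 * b) ^+ 2 = (a ^+ 2 - (c * a - b) * b) - (1 - c ^+ 2 / 4) * b ^+ 2.
      by field.
    rewrite cassini.
    by have := sqr_ge0 b; nra.
  by rewrite ler_norml; apply/andP; split; nra.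
have cb_le : `|c / 2 * b| <= `|b|.
  by rewrite !normrM normfV (ger0_norm (ler0n R 2)); have := normr_ge0 b; nra.
have := ler_normD (a - c / 2 * b) (c / 2 * b).
by rewrite subrK -[k.+1%:R]natr1; lra.
Qed.

Lemma cheb_gt c k : 2 < c -> (2 <= k)%N -> k%:R < cheb c k.
Proof.
move=> c_gt2.
have incr j : 0 <= cheb c j /\ 1 <= cheb c j.+1 - cheb c j.
  elim: j => [|j [ge0 step]]; first by rewrite /= subr0 lexx.
  split; first lra.
  have : 0 <= (c - 2) * cheb c j.+1 by apply: mulr_ge0; lra.
  rewrite chebSS; lra.
elim: k => [|[|k] IH] // k_ge2.
case: k IH k_ge2 => [|k] IH _; first by rewrite /= mulr1 subr0.
have [_ step] := incr k.+2; have := IH isT; rewrite -[k.+3%:R]natr1; lra.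
Qed.

Lemma cheb_norm_gt c k : 2 < `|c| -> (2 <= k)%N -> k%:R < `|cheb c k|.
Proof.
move=> c_gt2 k_ge2.
wlog c_ge0 : c c_gt2 / 0 <= c.
  move=> ge0_case; have [c_ge0|c_lt0] := lerP 0 c; first exact: ge0_case.
  rewrite -normrN in c_gt2; have := ge0_case _ c_gt2.
  by rewrite oppr_ge0 chebN normrM normrX normrN1 expr1n mul1r; apply; exact: ltW.
rewrite ger0_norm // in c_gt2.
by apply: lt_le_trans (cheb_gt _ _ c_gt2 k_ge2) (ler_norm _).
Qed.

Lemma cheb_norm_gt_iff c k : (2 <= k)%N -> (k%:R < `|cheb c k|) = (2 < `|c|).
Proof.
move=> k_ge2; apply/idP/idP => [|/cheb_norm_gt]; last exact.
by apply: contraLR; rewrite -!leNgt => /cheb_norm_le.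
Qed.

End ChebyshevBounds.

(* Rows of the tridiagonal matrix (1 - r^2) K_n(r)^-1 against the columns of K_n(r). *)
Section KMSKernel.
Context {R : comPzRingType}.
Variable r : R.

Lemma kms_kernel_first (i : nat) :
  r ^+ `|i - 0|%N - r * r ^+ `|i - 1|%N = (1 - r ^+ 2) * (i == 0)%N%:R.
Proof.
case: i => [|i]; first by rewrite distnn dist0n expr0 mulr1 expr1 expr2.
have -> : `|i.+1 - 0|%N = (i.+1)%N by lia.
have -> : `|i.+1 - 1|%N = (i)%N by lia.
by rewrite exprS mulr0 subrr.
Qed.

Lemma kms_kernel_mid (i j : nat) :
  - r * r ^+ `|i - j|%N + (1 + r ^+ 2) * r ^+ `|i - j.+1|%N - r * r ^+ `|i - j.+2|%N
  = (1 - r ^+ 2) * (i == j.+1)%:R.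
Proof.
case: (ltngtP i j.+1) => [lt_ij|lt_ji|->].
- have -> : `|i - j|%N = (j - i)%N by lia.
  have -> : `|i - j.+1|%N = ((j - i).+1)%N by lia.
  have -> : `|i - j.+2|%N = ((j - i).+2)%N by lia.
  by rewrite mulr0 !exprS; ring.
- have -> : `|i - j|%N = ((i - j.+2).+2)%N by lia.
  have -> : `|i - j.+1|%N = ((i - j.+2).+1)%N by lia.
  have -> : `|i - j.+2|%N = (i - j.+2)%N by lia.
  by rewrite mulr0 !exprS; ring.
- by rewrite mulr1 distnn distSn distnS expr0 expr1; ring.
Qed.

Lemma kms_kernel_last (i j : nat) : (i <= j.+1)%N ->
  r ^+ `|i - j.+1|%N - r * r ^+ `|i - j|%N = (1 - r ^+ 2) * (i == j.+1)%:R.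
Proof.
rewrite leq_eqVlt => /predU1P[->|lt_ij].
  by rewrite eqxx mulr1 distnn distSn expr0 expr1; ring.
have -> : `|i - j|%N = (j - i)%N by lia.
have -> : `|i - j.+1|%N = ((j - i).+1)%N by lia.
by rewrite (ltn_eqF lt_ij) mulr0 exprS subrr.
Qed.

End KMSKernel.

Section KMSEigenSequence.
Context {R : fieldType} {n : nat} {r lam : R} {x : nat -> R}.
Hypothesis x_eigen :
  forall j, (j < n)%N -> \sum_(i < n) x i * r ^+ `|i - j|%N = lam * x j.

Let sum_delta j : (j < n)%N -> \sum_(i < n) x i * ((i : nat) == j)%:R = x j.
Proof.
by move=> j_lt; under eq_bigr do rewrite mulr_natr mulrb; rewrite -big_mkcond big_ord1_eq j_lt.
Qed.

Lemma kms_eigen_first : (1 < n)%N -> lam * (x 0 - r * x 1) = (1 - r ^+ 2) * x 0.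
Proof.
move=> n_gt1; have n_gt0 := ltnW n_gt1.
rewrite mulrBr mulrCA -!x_eigen // -sum_delta // !mulr_sumr -sumrB.
by apply: eq_bigr => i _; rewrite [RHS]mulrCA -kms_kernel_first; ring.
Qed.

Lemma kms_eigen_mid j : (j.+2 < n)%N ->
  lam * (- r * x j + (1 + r ^+ 2) * x j.+1 - r * x j.+2) = (1 - r ^+ 2) * x j.+1.
Proof.
move=> j2_lt; have j1_lt := ltnW j2_lt; have j_lt := ltnW j1_lt.
have -> : lam * (- r * x j + (1 + r ^+ 2) * x j.+1 - r * x j.+2)
  = - r * (lam * x j) + (1 + r ^+ 2) * (lam * x j.+1) - r * (lam * x j.+2) by ring.
rewrite -!x_eigen // -sum_delta // !mulr_sumr -big_split /= -sumrB.
by apply: eq_bigr => i _; rewrite [RHS]mulrCA -kms_kernel_mid; ring.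
Qed.

Lemma kms_eigen_last j : n = j.+2 -> lam * (x j.+1 - r * x j) = (1 - r ^+ 2) * x j.+1.
Proof.
move=> n_eq; have j1_lt : (j.+1 < n)%N by rewrite n_eq.
have j_lt := ltnW j1_lt.
rewrite mulrBr mulrCA -!x_eigen // -sum_delta // !mulr_sumr -sumrB.
apply: eq_bigr => i _; have i_le : (i <= j.+1)%N by rewrite -ltnS -n_eq.
by rewrite [RHS]mulrCA -(kms_kernel_last _ _ _ i_le); ring.
Qed.

Hypotheses (n_gt1 : (1 < n)%N) (r_neq0 : r != 0) (r2_neq1 : 1 - r ^+ 2 != 0).
Hypothesis x_neq0 : exists2 j, (j < n)%N & x j != 0.

Lemma kms_eigenvalue_neq0 : lam != 0.
Proof.
apply/eqP => lam0; have [j j_lt xj_neq0] := x_neq0.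
suff : (1 - r ^+ 2) * x j = 0 by move/eqP; rewrite mulf_eq0 (negbTE r2_neq1) (negbTE xj_neq0).
case: j j_lt {xj_neq0} => [|j] j_lt; first by rewrite -kms_eigen_first // lam0 mul0r.
have [j_lt'|n_eq] : (j.+2 < n)%N \/ n = j.+2 by lia.
- by rewrite -kms_eigen_mid // lam0 mul0r.
- by rewrite -(kms_eigen_last j n_eq) lam0 mul0r.
Qed.

Section ChebyshevParameter.
Variable c : R.
Hypothesis lam_c : lam * (1 + r ^+ 2 - r * c) = 1 - r ^+ 2.

Let lam_neq0 : lam != 0.
Proof. by apply: contraNneq r2_neq1 => lam0; rewrite -lam_c lam0 mul0r. Qed.

Lemma kms_eigen_rec_first : x 1 = (c - r) * x 0.
Proof.
have := kms_eigen_first n_gt1; rewrite -lam_c -mulrA => /(mulfI lam_neq0) e.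
apply: (mulfI r_neq0); have -> : r * x 1 = x 0 - (x 0 - r * x 1) by ring.
by rewrite e; ring.
Qed.

Lemma kms_eigen_rec_mid j : (j.+2 < n)%N -> x j.+2 = c * x j.+1 - x j.
Proof.
move=> j_lt; have := kms_eigen_mid j j_lt; rewrite -lam_c -mulrA => /(mulfI lam_neq0) e.
apply: (mulfI r_neq0).
have -> : r * x j.+2 = - r * x j + (1 + r ^+ 2) * x j.+1
  - (- r * x j + (1 + r ^+ 2) * x j.+1 - r * x j.+2) by ring.
by rewrite e; ring.
Qed.

Lemma kms_eigen_rec_last j : n = j.+2 -> x j = (c - r) * x j.+1.
Proof.
move=> n_eq; have := kms_eigen_last j n_eq; rewrite -lam_c -mulrA => /(mulfI lam_neq0) e.
apply: (mulfI r_neq0); have -> : r * x j = x j.+1 - (x j.+1 - r * x j) by ring.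
by rewrite e; ring.
Qed.

Lemma kms_eigen_cheb k : (k < n)%N -> x k = x 0 * (cheb c k.+1 - r * cheb c k).
Proof.
case: k => [|k] k_lt; first by rewrite /=; ring.
by rewrite (cheb_solution _ _ _ kms_eigen_rec_mid) // kms_eigen_rec_first chebSS; ring.
Qed.

Lemma kms_eigen_x0_neq0 : x 0 != 0.
Proof.
have [j j_lt xj_neq0] := x_neq0.
by apply: contra_neq xj_neq0 => x0_eq0; rewrite kms_eigen_cheb // x0_eq0 mul0r.
Qed.

Lemma kms_eigen_boundary :
  cheb c n.+1 - 2 * r * cheb c n + r ^+ 2 * cheb c n.-1 = 0.
Proof.
have [m n_eq] : exists m, n = m.+2 by exists n.-2; lia.
have m1_lt : (m.+1 < n)%N by rewrite n_eq.
have := kms_eigen_rec_last m n_eq.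
rewrite (kms_eigen_cheb _ (ltnW m1_lt)) (kms_eigen_cheb _ m1_lt) mulrCA.
move=> /(mulfI kms_eigen_x0_neq0) e.
rewrite n_eq -pred_Sn.
have -> : cheb c m.+3 - 2 * r * cheb c m.+2 + r ^+ 2 * cheb c m.+1
  = (c - r) * (cheb c m.+2 - r * cheb c m.+1) - (cheb c m.+1 - r * cheb c m).
  by rewrite [cheb c m.+3]chebSS [cheb c m.+2]chebSS; ring.
by rewrite -e subrr.
Qed.

Lemma kms_eigen_sqr : lam ^+ 2 = cheb c n ^+ 2.
Proof.
have mu_neq0 : 1 + r ^+ 2 - r * c != 0.
  by apply: contraNneq r2_neq1 => mu0; rewrite -lam_c mu0 mulr0.
have := cheb_boundary_sqr _ _ _ (ltnW n_gt1) kms_eigen_boundary.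
by rewrite -lam_c !exprMn [RHS]mulrC => /(mulfI (expf_neq0 2 mu_neq0)) ->.
Qed.

End ChebyshevParameter.

Lemma kms_eigen_cheb_sqr :
  exists c, lam * (1 + r ^+ 2 - r * c) = 1 - r ^+ 2 /\ lam ^+ 2 = cheb c n ^+ 2.
Proof.
have lam_neq0 := kms_eigenvalue_neq0.
pose c := (1 + r ^+ 2 - (1 - r ^+ 2) / lam) / r.
have lam_c : lam * (1 + r ^+ 2 - r * c) = 1 - r ^+ 2 by rewrite /c; field; rewrite r_neq0.
by exists c; split; last exact: kms_eigen_sqr.
Qed.

End KMSEigenSequence.

Lemma eigenvalue_norm_le (R : realFieldType) n (A : 'M[R]_n) lam :
  (forall i j, `|A i j| <= 1) -> eigenvalue A lam -> `|lam| <= n%:R.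
Proof.
move=> A_le1 /eigenvalueP[v vA /rV0Pn[k0 vk0_neq0]].
have [i _ vi_max] := @arg_maxP _ _ _ k0 xpredT (fun k => `|v 0 k|) isT.
have vi_gt0 : 0 < `|v 0 i| by apply: lt_le_trans (vi_max k0 isT); rewrite normr_gt0.
rewrite -(ler_pM2r vi_gt0) -normrM.
have <- : (v *m A) 0 i = lam * v 0 i by rewrite vA mxE.
rewrite mxE; apply: le_trans (ler_norm_sum _ _ _) _.
apply: le_trans (_ : _ <= \sum_(j < n) `|v 0 i|) _.
  by apply: ler_sum => j _; rewrite normrM -[X in _ <= X]mulr1 ler_pM //; exact: vi_max.
by rewrite sumr_const card_ord mulr_natl.
Qed.

Lemma KMS_eigen_seq {R : realType} {n : nat} {rho lam : R} :
  eigenvalue (KMS n rho) lam ->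
  exists2 x : nat -> R, exists2 j, (j < n)%N & x j != 0
    & forall j, (j < n)%N -> \sum_(i < n) x i * rho ^+ `|i - j|%N = lam * x j.
Proof.
move=> /eigenvalueP[v vK /rV0Pn[k vk_neq0]].
pose x j := oapp (fun i : 'I_n => v 0 i) 0 (insub j).
have xE (i : 'I_n) : x i = v 0 i by rewrite /x valK.
exists x; first by exists k; rewrite ?xE.
move=> j j_lt; have := congr1 (fun u : 'rV_n => u 0 (Ordinal j_lt)) vK.
rewrite !mxE -[v 0 _]xE => <-.
by apply: eq_bigr => i _; rewrite xE mxE.
Qed.

Lemma two_cos_range (R : realType) (c : R) :
  (exists2 t, - pi < t <= pi & c = 2 * cos t) <-> `|c| <= 2.
Proof.
split => [[t _ ->] | c_le2].
  by rewrite normrM ger0_norm // -[X in _ <= X]mulr1 ler_pM2l // cos_max.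
have c2_in : -1 <= c / 2 <= 1.
  by move: c_le2; rewrite ler_norml => /andP[? ?]; apply/andP; split; lra.
exists (acos (c / 2)); last by rewrite acosK ?in_itv //; field.
by rewrite acos_lepi // andbT; have := acos_ge0 c2_in; have := pi_gt0 R; lra.
Qed.

Section SigmaRange.
Context {R : realType} {r lam c : R}.
Hypotheses (r_neq0 : r != 0) (r2_neq1 : 1 - r ^+ 2 != 0).
Hypothesis lam_c : lam * (1 + r ^+ 2 - r * c) = 1 - r ^+ 2.

Lemma sigma_eq_iff t : sigma r t = lam <-> c = 2 * cos t.
Proof.
have mu_neq0 : 1 + r ^+ 2 - r * c != 0.
  by apply: contraNneq r2_neq1 => mu0; rewrite -lam_c mu0 mulr0.
have -> : lam = (1 - r ^+ 2) / (1 + r ^+ 2 - r * c) by rewrite -lam_c mulfK.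
rewrite /sigma; split => [|->]; last by congr (_ / _); ring.
move=> /(mulfI r2_neq1)/invr_inj den_eq; apply: (mulfI r_neq0); lra.
Qed.

Lemma sigma_range_iff : sigma_range r lam <-> `|c| <= 2.
Proof.
rewrite -two_cos_range.
by split=> -[t t_in /(sigma_eq_iff t) t_eq]; exists t.
Qed.

End SigmaRange.

Theorem corollary6p9 (R : realType) (n : nat) (rho lam : R) :
  (2 <= n)%N -> 0 <= rho -> eigenvalue (KMS n rho) lam ->
  (extraordinary rho lam <-> n%:R < `|lam|).
Proof.
move=> n_ge2 rho_ge0 eig; rewrite /extraordinary /ordinary.
case: ifP => [rho_triv | /negbT].
  have rho_le1 : rho <= 1 by move: rho_triv => /orP[/orP[]|] /eqP ->; lra.
  have lam_le : `|lam| <= n%:R.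
    apply: eigenvalue_norm_le eig => i j.
    by rewrite mxE normrX ger0_norm // exprn_ile1.
  by rewrite ltNge lam_le; split => // /(_ I).
rewrite !negb_or => /andP[/andP[rho_neq0 rho_neq1] rho_neqN1].
have r2_neq1 : 1 - rho ^+ 2 != 0.
  by rewrite subr_eq0 eq_sym sqrf_eq1 negb_or rho_neq1.
have [x x_neq0 x_eig] := KMS_eigen_seq eig.
have [c [lam_c lam_sqr]] := kms_eigen_cheb_sqr x_eig n_ge2 rho_neq0 r2_neq1 x_neq0.
have lam_norm : `|lam| = `|cheb c n|.
  by apply/eqP; rewrite -(@eqrXn2 _ 2) // -!normrX lam_sqr.
rewrite (sigma_range_iff rho_neq0 r2_neq1 lam_c) lam_norm cheb_norm_gt_iff // ltNge.
by split => /negP.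
Qed.
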